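(* Let $F\colon\mathbf{A}\to\mathbf{C}$ be a discrete opfibration and let $J\colon\mathbf{A}\to\mathbf{B}$ be a cosieve, via which $\mathbf{A}$ is regarded as an out-degree-zero subcategory of $\mathbf{B}$. Let $B$ be an object of $\mathbf{B}$ not in $\mathbf{A}$ and let $C$ be an object of $\mathbf{C}$. Let $\sim$ be the equivalence relation on $\coprod_{A\in\mathrm{ob}\,\mathbf{A}}\mathbf{C}(FA,C)\times\mathbf{B}(B,A)$ generated by $(c,a\circ b)\sim(c\circ Fa,b)$ for all objects $A_1,A_2$ of $\mathbf{A}$, all $b\in\mathbf{B}(B,A_1)$, all $a\in\mathbf{A}(A_1,A_2)$ and all $c\in\mathbf{C}(FA_2,C)$. Then for all objects $A_1,A_2$ of $\mathbf{A}$, all $b_1\in\mathbf{B}(B,A_1)$, $b_2\in\mathbf{B}(B,A_2)$, $c_1\in\mathbf{C}(FA_1,C)$ and $c_2\in\mathbf{C}(FA_2,C)$, if $(c_1,b_1)\sim(c_2,b_2)$ then $\varphi_{F,A_1}(c_1)\circ b_1=\varphi_{F,A_2}(c_2)\circ b_2$.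
   Context: A functor $F\colon\mathbf{A}\to\mathbf{C}$ is a discrete opfibration if for each object $A$ of $\mathbf{A}$ and each morphism $c$ of $\mathbf{C}$ with domain $FA$ there is a unique morphism of $\mathbf{A}$ with domain $A$ mapped by $F$ to $c$; this unique morphism is denoted $\varphi_{F,A}(c)$. A cosieve is an injective-on-objects discrete opfibration; equivalently (up to isomorphism) the inclusion of an out-degree-zero subcategory, i.e. a subcategory such that every morphism of the ambient category whose domain lies in the subcategory belongs to the subcategory. $\mathbf{B}(X,Y)$ denotes the set of morphisms $X\to Y$ in $\mathbf{B}$; composites in the conclusion are taken in $\mathbf{B}$. *)

From Stdlib Require Import Relations.

Set Implicit Arguments.
Set Universe Polymorphism.

Record Category := {
  ob :> Type;
  hom : ob -> ob -> Type;
  idm : forall x, hom x x;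
  comp : forall x y z, hom y z -> hom x y -> hom x z;
  comp_idl : forall x y (f : hom x y), comp (idm y) f = f;
  comp_idr : forall x y (f : hom x y), comp f (idm x) = f;
  comp_assoc : forall w x y z (h : hom y z) (g : hom x y) (f : hom w x),
      comp h (comp g f) = comp (comp h g) f
}.

Arguments hom {c} _ _.
Arguments idm {c} _.
Arguments comp {c x y z} _ _.

(** A morphism out of [x], packaged with its codomain (so that morphisms
    with possibly different codomains can be compared for equality). *)
Definition out_mor (C : Category) (x : C) := { y : C & hom x y }.

Record Functor (A C : Category) := {
  fobj :> A -> C;
  fmap : forall x y, hom x y -> hom (fobj x) (fobj y);
  fmap_id : forall x, fmap x x (idm x) = idm (fobj x);
  fmap_comp : forall x y z (g : hom y z) (f : hom x y),
      fmap x z (comp g f) = comp (fmap y z g) (fmap x y f)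
}.

Arguments fmap {A C} f0 {x y} _.

(** A discrete opfibration: for each object [a] of [A] and each morphism [c]
    of [C] with domain [F a], a (necessarily unique) morphism [phi a c] of [A]
    with domain [a] mapped by [F] to [c]; uniqueness is part of the structure. *)
Record DiscreteOpfibration (A C : Category) (F : Functor A C) := {
  phi : forall (a : A) (x : C), hom (F a) x -> @out_mor A a;
  phi_lifts : forall (a : A) (x : C) (c : hom (F a) x),
      existT (fun y => hom (F a) y) (F (projT1 (phi a x c))) (fmap F (projT2 (phi a x c)))
      = existT _ x c;
  phi_unique : forall (a : A) (x : C) (c : hom (F a) x) (m : @out_mor A a),
      existT (fun y => hom (F a) y) (F (projT1 m)) (fmap F (projT2 m))
      = existT _ x c -> m = phi a x c
}.

Arguments phi {A C F} _ {a x} _.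

Record Cosieve (A B : Category) (J : Functor A B) := {
  cosieve_dopf : DiscreteOpfibration J;
  cosieve_inj : forall a a' : A, J a = J a' -> a = a'
}.

Definition Zig (A B C : Category) (F : Functor A C) (J : Functor A B)
  (b : B) (c : C) := { a : A & (hom (F a) c * hom b (J a))%type }.

Inductive zig_gen (A B C : Category) (F : Functor A C) (J : Functor A B)
  (b : B) (c : C) : Zig F J b c -> Zig F J b c -> Prop :=
| zig_gen_intro : forall (a1 a2 : A) (b0 : hom b (J a1)) (a0 : hom a1 a2)
      (c0 : hom (F a2) c),
    zig_gen (existT _ a2 (c0, comp (fmap J a0) b0))
            (existT _ a1 (comp c0 (fmap F a0), b0)).

Definition zig_equiv (A B C : Category) (F : Functor A C) (J : Functor A B)
  (b : B) (c : C) : relation (Zig F J b c) :=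
  clos_refl_sym_trans _ (@zig_gen A B C F J b c).

(* The assignment (c, b) |-> phi(c) o b is invariant under the generating
   relation: by uniqueness of opcartesian lifts, phi(c o F a) is phi(c) o a, so
   both sides of (c, J a o b) ~ (c o F a, b) are sent to J(phi c) o J a o b.
   An invariant of a relation is an invariant of the equivalence relation it
   generates. *)
From Stdlib Require Import Relations.

Lemma clos_refl_sym_trans_invariant (X Y : Type) (R : relation X) (f : X -> Y) :
  (forall x y, R x y -> f x = f y) ->
  forall x y, clos_refl_sym_trans X R x y -> f x = f y.
Proof.
  intros Hf x y H.
  induction H as [x y Hxy | x | x y _ IH | x y z _ IHxy _ IHyz].
  - apply Hf; assumption.
  - reflexivity.
  - symmetry; assumption.
  - transitivity (f y); assumption.
Qed.

Definition out_precomp (C : Category) (u x : C) (s : @out_mor C x) (g : hom u x) :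
  @out_mor C u :=
  existT _ (projT1 s) (comp (projT2 s) g).

Definition out_fmap (A C : Category) (F : Functor A C) (x : A) (s : @out_mor A x) :
  @out_mor C (F x) :=
  existT _ (F (projT1 s)) (fmap F (projT2 s)).

Arguments out_precomp {C u x} s g.
Arguments out_fmap {A C} F {x} s.

Lemma out_precomp_comp (C : Category) (v u x : C) (s : @out_mor C x)
  (g : hom u x) (f : hom v u) :
  out_precomp (out_precomp s g) f = out_precomp s (comp g f).
Proof. unfold out_precomp; simpl; rewrite comp_assoc; reflexivity. Qed.

Lemma out_fmap_precomp (A C : Category) (F : Functor A C) (u x : A)
  (s : @out_mor A x) (g : hom u x) :
  out_fmap F (out_precomp s g) = out_precomp (out_fmap F s) (fmap F g).
Proof. unfold out_fmap, out_precomp; simpl; rewrite fmap_comp; reflexivity. Qed.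

Lemma phi_comp_fmap (A C : Category) (F : Functor A C) (HF : DiscreteOpfibration F)
  (a1 a2 : A) (a0 : hom a1 a2) (x : C) (c0 : hom (F a2) x) :
  phi HF (comp c0 (fmap F a0)) = out_precomp (phi HF c0) a0.
Proof.
  symmetry; apply phi_unique.
  change (out_fmap F (out_precomp (phi HF c0) a0)
          = out_precomp (existT (fun y => hom (F a2) y) x c0) (fmap F a0)).
  rewrite out_fmap_precomp.
  f_equal; apply phi_lifts.
Qed.

Section ZigLift.

Variables (A B C : Category) (F : Functor A C) (J : Functor A B).
Variable HF : DiscreteOpfibration F.
Variables (b : B) (c : C).

Definition zig_lift (z : Zig F J b c) : @out_mor B b :=
  out_precomp (out_fmap J (phi HF (fst (projT2 z)))) (snd (projT2 z)).

Lemma zig_lift_gen (z1 z2 : Zig F J b c) : zig_gen z1 z2 -> zig_lift z1 = zig_lift z2.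
Proof.
  intros [a1 a2 b0 a0 c0]; unfold zig_lift; simpl.
  rewrite phi_comp_fmap, out_fmap_precomp, out_precomp_comp.
  reflexivity.
Qed.

Lemma zig_lift_equiv (z1 z2 : Zig F J b c) :
  zig_equiv z1 z2 -> zig_lift z1 = zig_lift z2.
Proof. apply clos_refl_sym_trans_invariant, zig_lift_gen. Qed.

End ZigLift.

Arguments zig_lift_equiv {A B C F J} HF {b c z1 z2} _.

Theorem lemma5p3 (A B C : Category) (F : Functor A C) (J : Functor A B)
  (HF : DiscreteOpfibration F) (HJ : Cosieve J)
  (b : B) (Hb : forall a : A, J a <> b) (c : C) :
  forall (a1 a2 : A) (b1 : hom b (J a1)) (b2 : hom b (J a2))
         (c1 : hom (F a1) c) (c2 : hom (F a2) c),
    @zig_equiv A B C F J b c (existT _ a1 (c1, b1)) (existT _ a2 (c2, b2)) ->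
    existT (fun y : B => hom b y) (J (projT1 (phi HF c1)))
           (comp (fmap J (projT2 (phi HF c1))) b1)
    = existT (fun y : B => hom b y) (J (projT1 (phi HF c2)))
           (comp (fmap J (projT2 (phi HF c2))) b2).
Proof.
  intros a1 a2 b1 b2 c1 c2 H.
  exact (zig_lift_equiv HF H).
Qed.
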